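(* Let $(K_n,\Sigma)$ be a signed complete graph with $n\geq4$, and let $Y(\Sigma)$ be the set of edges $vw$ of $K_n$ such that for every $u\in V(K_n)\setminus\{v,w\}$, the triangle $uvw$ is odd and the number of odd triangles containing $u$ and $v$ is one more than the number of even triangles containing $u$ and $v$. Then $|Y(\Sigma)|\leq1$.
   Context: A signed graph is a pair $(G,\Sigma)$ with $G$ a finite simple graph and $\Sigma\subseteq E(G)$ (the odd edges). A triangle $uvw$ is odd (resp. even) if $|\Sigma\cap\{uv,uw,vw\}|$ is odd (resp. even). *)

From mathcomp Require Import all_boot.
Set Implicit Arguments. Unset Strict Implicit. Unset Printing Implicit Defensive.

(* The complete graph K_n on vertex set 'I_n; an edge is a 2-element subset.
   A signing Sigma is a set of edges of K_n (the odd edges). *)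
Definition Kn_edges (n : nat) : {set {set 'I_n}} := [set e : {set 'I_n} | #|e| == 2].

Definition signing (n : nat) (Sigma : {set {set 'I_n}}) : Prop :=
  Sigma \subset Kn_edges n.

Definition odd_triangle n (Sigma : {set {set 'I_n}}) (u v w : 'I_n) : bool :=
  odd #|Sigma :&: [set [set u; v]; [set u; w]; [set v; w]]|.

Definition n_odd_tri n (Sigma : {set {set 'I_n}}) (u v : 'I_n) : nat :=
  #|[set x : 'I_n | (x != u) && (x != v) && odd_triangle Sigma u v x]|.
Definition n_even_tri n (Sigma : {set {set 'I_n}}) (u v : 'I_n) : nat :=
  #|[set x : 'I_n | (x != u) && (x != v) && ~~ odd_triangle Sigma u v x]|.

Definition Ycond n (Sigma : {set {set 'I_n}}) (v w : 'I_n) : bool :=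
  [forall u : 'I_n, ((u != v) && (u != w)) ==>
     (odd_triangle Sigma u v w && (n_odd_tri Sigma u v == (n_even_tri Sigma u v).+1))].

(* Y(Sigma): edges vw of K_n (for some naming v,w of the endpoints) satisfying the condition *)
Definition Yset n (Sigma : {set {set 'I_n}}) : {set {set 'I_n}} :=
  [set e : {set 'I_n} | [exists v : 'I_n, exists w : 'I_n,
     (v != w) && (e == [set v; w]) && Ycond Sigma v w]].

From mathcomp Require Import all_boot zify.
Set Implicit Arguments. Unset Strict Implicit. Unset Printing Implicit Defensive.

(* Write n_odd(u,v) for the number of odd triangles on the edge uv.  If vw is in
   Y(Sigma), all triangles on vw are odd and n = 2k + 1 with n_odd(u,v) = k for every
   u outside {v,w}.  Hence no edge zv with z outside {v,w} carries only odd triangles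
   (that would force n - 2 = 1), and by the cocycle identity of triangle parities on
   the K4 {z,v,w,x} no edge zw does either.  As every triangle on an edge of Y(Sigma)
   is odd, a second edge ab of Y(Sigma) cannot meet vw.  If it is disjoint from vw,
   counting the odd triangles at v twice shows that (n - 2)(k + 1) is even, so k is
   odd; some u spans an even triangle with av (otherwise av carries only odd
   triangles), and the cocycle identity then gives
   n_odd(u,a) = n_odd(u,v) + n_odd(a,v) mod 2, that is k = 2k mod 2. *)

Lemma card_setI3 (T : finType) (S : {set T}) (A B C : T) :
  A != B -> A != C -> B != C ->
  #|S :&: [set A; B; C]| = (A \in S) + (B \in S) + (C \in S).
Proof.
move=> AB AC BC; rewrite -sum1_card (eq_bigl (fun e => (e \in [set A; B; C]) && (e \in S))).
  rewrite big_mkcondr setUC big_setU1 /=; last by rewrite !inE negb_or !(eq_sym C) AC BC.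
  by rewrite big_setU1 ?big_set1 ?inE //= addnC.
by move=> e; rewrite !inE andbC.
Qed.

Lemma card_setC2 (T : finType) (u v : T) : u != v ->
  #|[set x | (x != u) && (x != v)]| = #|T| - 2.
Proof.
move=> uv; rewrite -(cardsC [set u; v]) cards2 uv addKn.
by apply: eq_card => x; rewrite !inE negb_or.
Qed.

Lemma odd_card_addb (T : finType) (A B : {pred T}) :
  odd #|[pred x | (x \in A) (+) (x \in B)]| = odd #|A| (+) odd #|B|.
Proof.
rewrite -oddD -cardUI -(cardID [predI A & B] [predU A & B]).
have -> : #|[predI [predU A & B] & [predI A & B]]| = #|[predI A & B]|.
  by apply: eq_card => x; rewrite !inE; case: (x \in A); case: (x \in B).
rewrite addnAC oddD addnn odd_double addFb.
by congr (odd _); apply: eq_card => x; rewrite !inE; case: (x \in A); case: (x \in B).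
Qed.

Lemma handshake (T : finType) (r : rel T) :
  symmetric r -> irreflexive r -> ~~ odd (\sum_x \sum_y r x y).
Proof.
move=> r_sym r_irr; pose up x y := r x y && (enum_rank x < enum_rank y).
have -> : \sum_x \sum_y r x y = \sum_x \sum_y up x y + \sum_x \sum_y up y x.
  rewrite -big_split; apply: eq_bigr => x _; rewrite -big_split; apply: eq_bigr => y _.
  rewrite /up (r_sym y x).
  by case: ltngtP => [||/val_inj/enum_rank_inj ->]; rewrite ?r_irr /= ?andbT ?andbF ?addn0.
by rewrite [X in _ + X]exchange_big addnn odd_double.
Qed.

Section Triangles.

Variables (n : nat) (S : {set {set 'I_n}}).

Lemma odd_triangleE u v w : u != v -> u != w -> v != w ->
  odd_triangle S u v w = ([set u; v] \in S) (+) ([set u; w] \in S) (+) ([set v; w] \in S).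
Proof.
move=> uv uw vw; rewrite /odd_triangle card_setI3 ?oddD ?oddb //.
- by apply/eqP => /setP/(_ v); rewrite !inE eqxx orbT eq_sym (negbTE uv) (negbTE vw).
- by apply/eqP => /setP/(_ u); rewrite !inE eqxx (negbTE uv) (negbTE uw).
- by apply/eqP => /setP/(_ u); rewrite !inE eqxx (negbTE uv) (negbTE uw).
Qed.

Lemma odd_triangleC12 u v w : odd_triangle S u v w = odd_triangle S v u w.
Proof. by rewrite /odd_triangle [[set v; u]]setUC setUAC. Qed.

Lemma odd_triangleC23 u v w : odd_triangle S u v w = odd_triangle S u w v.
Proof. by rewrite /odd_triangle [[set w; v]]setUC (setUC [set [set u; w]]). Qed.

Lemma odd_triangleC13 u v w : odd_triangle S u v w = odd_triangle S w v u.
Proof. by rewrite odd_triangleC12 odd_triangleC23 odd_triangleC12. Qed.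

(* Triangle parities form a coboundary, so the four faces of a K4 have even total parity. *)
Lemma odd_triangle_cocycle u v w x :
  u != v -> u != w -> u != x -> v != w -> v != x -> w != x ->
  odd_triangle S u v x =
    odd_triangle S u v w (+) odd_triangle S x v w (+) odd_triangle S u w x.
Proof.
move=> uv uw ux vw vx wx; rewrite !odd_triangleE // 1?eq_sym //.
rewrite [[set x; v]]setUC [[set x; w]]setUC.
by move: ([set u; v] \in S) ([set u; w] \in S) ([set u; x] \in S)
  ([set v; w] \in S) ([set v; x] \in S) ([set w; x] \in S) => [] [] [] [] [] [].
Qed.

Lemma n_odd_even_tri u v : u != v -> n_odd_tri S u v + n_even_tri S u v = n - 2.
Proof.
move=> uv; have := card_setC2 uv; rewrite card_ord => <-.
rewrite -(cardsID [set x | odd_triangle S u v x]).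
by congr (_ + _); apply: eq_card => x; rewrite !inE andbC.
Qed.

Definition odd_book z y := forall x, x != z -> x != y -> odd_triangle S z y x.

Lemma odd_book_n_even_tri z y : odd_book z y -> n_even_tri S z y = 0.
Proof.
move=> book; apply: eq_card0 => x; rewrite inE.
by case: (x != z) (book x) => //; case: (x != y) => // ->.
Qed.

Lemma even_sum_n_odd_tri v : ~~ odd (\sum_(u | u != v) n_odd_tri S u v).
Proof.
pose r u x := (u != v) && ((x != u) && (x != v) && odd_triangle S u v x).
have r_sym : symmetric r.
  move=> u x; rewrite /r [odd_triangle S u v x]odd_triangleC13 (eq_sym x u).
  by case: (u != v); case: (x != v); case: (u != x).
have r_irr : irreflexive r by move=> u; rewrite /r eqxx andbF.
suff -> : \sum_(u | u != v) n_odd_tri S u v = \sum_u \sum_x r u x by apply: handshake.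
rewrite [RHS](bigID (fun u => u != v)) /= [X in _ + X]big1 ?addn0 => [|u /negPn uv].
  apply: eq_bigr => u uv; rewrite /n_odd_tri -sum1_card big_mkcond.
  by apply: eq_bigr => x _; rewrite /r uv inE.
by apply: big1 => x _; rewrite /r uv.
Qed.

Lemma odd_n_odd_tri_split u a v : u != a -> u != v -> a != v ->
    ~~ odd_triangle S a v u ->
  odd (n_odd_tri S u a) = odd (n_odd_tri S u v) (+) odd (n_odd_tri S a v).
Proof.
move=> ua uv av avu_even; rewrite /n_odd_tri -odd_card_addb; congr (odd _).
have uav_even : ~~ odd_triangle S u a v by rewrite odd_triangleC12 odd_triangleC23.
apply: eq_card => x; rewrite !inE.
have [->|xu] := eqVneq x u; first by rewrite ua uv /= (negbTE avu_even).
have [->|xa] := eqVneq x a.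
  by rewrite [odd_triangle S u v a]odd_triangleC13 (negbTE avu_even) andbF.
have [->|xv] := eqVneq x v; first by rewrite (negbTE uav_even) andbF.
have [ux ax vx] : [/\ u != x, a != x & v != x] by rewrite !(eq_sym _ x).
rewrite (odd_triangle_cocycle ua uv ux av ax vx) (negbTE uav_even) /=.
by rewrite [odd_triangle S x a v]odd_triangleC12 [odd_triangle S a x v]odd_triangleC23 addbC.
Qed.

End Triangles.

Section YcondEdge.

Variables (n : nat) (S : {set {set 'I_n}}) (v w : 'I_n).
Hypothesis Yvw : Ycond S v w.

Lemma Ycond_odd_triangle u : u != v -> u != w -> odd_triangle S u v w.
Proof. by move=> uv uw; move/forallP/(_ u): Yvw; rewrite uv uw => /andP[]. Qed.

Lemma Ycond_n_odd_tri u : u != v -> u != w ->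
  n_odd_tri S u v = (n_even_tri S u v).+1.
Proof. by move=> uv uw; move/forallP/(_ u): Yvw; rewrite uv uw => /andP[_ /eqP]. Qed.

Lemma Ycond_n_even_tri u : u != v -> u != w -> (n_even_tri S u v).*2.+1 = n - 2.
Proof. by move=> uv uw; rewrite -(n_odd_even_tri S uv) (Ycond_n_odd_tri uv uw) addSn addnn. Qed.

Lemma Ycond_odd_book_vw : odd_book S v w.
Proof.
by move=> x xv xw; rewrite odd_triangleC13 odd_triangleC23; apply: Ycond_odd_triangle.
Qed.

Lemma Ycond_odd_book_wv : odd_book S w v.
Proof. by move=> x xw xv; rewrite odd_triangleC13; apply: Ycond_odd_triangle. Qed.

Hypothesis n_gt3 : 3 < n.

Lemma Ycond_not_odd_book_v z : z != v -> z != w -> ~ odd_book S z v.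
Proof.
move=> zv zw /odd_book_n_even_tri n_even0.
by have := Ycond_n_even_tri zv zw; rewrite n_even0; lia.
Qed.

Hypothesis vw : v != w.

Lemma Ycond_odd_n_odd_tri u : u != v -> u != w -> odd (n_odd_tri S u v).
Proof.
move=> uv uw; have wv : w != v by rewrite eq_sym.
have odd_n2 : odd (n - 2) by rewrite -(Ycond_n_even_tri uv uw) /= odd_double.
have n_odd_wv : n_odd_tri S w v = n - 2.
  by rewrite -(n_odd_even_tri S wv) odd_book_n_even_tri ?addn0 //; apply: Ycond_odd_book_wv.
have := even_sum_n_odd_tri S v; rewrite (bigD1 w) //= n_odd_wv.
rewrite (eq_bigr (fun=> n_odd_tri S u v)) => [|x /andP[xv xw]]; last first.
  rewrite !Ycond_n_odd_tri //; congr _.+1; apply/double_inj/succn_inj.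
  by rewrite !Ycond_n_even_tri.
rewrite sum_nat_const (eq_card (_ : _ =i [set x | (x != v) && (x != w)])) => [|x].
  by rewrite card_setC2 // card_ord oddD oddM odd_n2 negbK.
by rewrite inE.
Qed.

Lemma Ycond_not_odd_book_w z : z != v -> z != w -> ~ odd_book S z w.
Proof.
move=> zv zw book; apply: (Ycond_not_odd_book_v zv zw) => x xz xv.
have [->|xw] := eqVneq x w; first exact: Ycond_odd_triangle.
have [zx vx wx] : [/\ z != x, v != x & w != x] by rewrite !(eq_sym _ x).
by rewrite (odd_triangle_cocycle S zv zw zx vw vx wx) !Ycond_odd_triangle // book.
Qed.

Lemma Ycond_not_odd_book y z :
  y \in [set v; w] -> z \notin [set v; w] -> ~ odd_book S z y.
Proof.
rewrite !inE negb_or => /orP[] /eqP -> /andP[zv zw].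
  exact: Ycond_not_odd_book_v.
exact: Ycond_not_odd_book_w.
Qed.

End YcondEdge.

Lemma Ycond_disjoint n (S : {set {set 'I_n}}) v w a b : 3 < n -> v != w -> a != b ->
  Ycond S v w -> Ycond S a b -> a \notin [set v; w] -> b \notin [set v; w] -> False.
Proof.
move=> n_gt3 vw ab Yvw Yab; rewrite !inE !negb_or => /andP[av aw] /andP[bv bw].
pose witness u := [&& u != v, u != w, u != a, u != b & ~~ odd_triangle S a v u].
have [u /and5P[uv uw ua ub avu_even] | no_witness] := pickP witness; last first.
  apply: (Ycond_not_odd_book_v Yvw n_gt3 av aw) => x xa xv.
  have [->|xw] := eqVneq x w; first exact: Ycond_odd_triangle.
  have [->|xb] := eqVneq x b.
    by rewrite odd_triangleC12 Ycond_odd_triangle // eq_sym.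
  by move: (no_witness x); rewrite /witness xv xw xa xb => /negbFE.
have := odd_n_odd_tri_split ua uv av avu_even.
by rewrite !(Ycond_odd_n_odd_tri Yvw) // (Ycond_odd_n_odd_tri Yab).
Qed.

Lemma Ycond_edge_unique n (S : {set {set 'I_n}}) v w a b : 3 < n -> v != w -> a != b ->
  Ycond S v w -> Ycond S a b -> [set a; b] = [set v; w].
Proof.
move=> n_gt3 vw ab Yvw Yab.
have [a_in | a_out] := boolP (a \in [set v; w]);
  have [b_in | b_out] := boolP (b \in [set v; w]).
- by apply/eqP; rewrite eqEcard subUset !sub1set a_in b_in !cards2 ab vw.
- by case: (Ycond_not_odd_book Yvw n_gt3 vw a_in b_out); apply: Ycond_odd_book_wv.
- by case: (Ycond_not_odd_book Yvw n_gt3 vw b_in a_out); apply: Ycond_odd_book_vw.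
- by case: (Ycond_disjoint n_gt3 vw ab Yvw Yab a_out b_out).
Qed.

Theorem lemma3p4 (n : nat) (Sigma : {set {set 'I_n}}) :
  4 <= n -> signing Sigma -> #|Yset Sigma| <= 1.
Proof.
move=> n_gt3 _; rewrite leqNgt; apply/negP => /card_gt1P[e1 [e2 []]].
rewrite !inE => /existsP[v /existsP[w /andP[/andP[vw /eqP->] Yvw]]].
move=> /existsP[a /existsP[b /andP[/andP[ab /eqP->] Yab]]].
by rewrite (Ycond_edge_unique n_gt3 vw ab Yvw Yab) eqxx.
Qed.
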